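(* Let $A$ be a $2\times2$ matrix of Laurent polynomials with compatible symmetry. Then there exist strongly invertible $2\times2$ matrices $P$ and $Q$ of Laurent polynomials with compatible symmetry such that $$P(z)A(z)Q(z)=\mathrm{diag}(e_1(z),e_2(z)),$$ where all multiplications are compatible and both $e_1,e_2$ have symmetry. Furthermore, if $d_1,d_2$ are the invariant polynomials of $A$, then $\{Z(e_1,z_0),Z(e_2,z_0)\}=\{Z(d_1,z_0),Z(d_2,z_0)\}$ (as multisets) for all $z_0\in\mathbb C\setminus\{0\}$.
   Context: Laurent polynomials $u(z)=\sum_ku(k)z^k$ with finitely many nonzero complex coefficients. $u$ has symmetry of type $\epsilon z^c$ if $u(z)=\epsilon z^cu(z^{-1})$; zero has every type. A type means $\pm z^m$, $m\in\mathbb Z$. An $r\times s$ matrix $P$ has compatible symmetry if there are types $\tau_1,\dots,\tau_r,\rho_1,\dots,\rho_s$ with each $P_{j,k}$ of type $\tau_j^{-1}\rho_k$. A product $P_1\cdots P_m$ is compatible if there are type vectors $\tau^{(0)},\dots,\tau^{(m)}$ with each entry $(P_i)_{j,k}$ of type $(\tau^{(i-1)}_j)^{-1}\tau^{(i)}_k$. A square matrix is strongly invertible if its determinant is a nonzero monomial. $Z(u,z_0)$ is the multiplicity of $z_0$ as a zero of $u$. Invariant polynomials: $A$ has a Smith normal form $A=E\,\mathrm{diag}(d_1,d_2)\,F$ with $E,F$ strongly invertible $2\times2$ matrices of Laurent polynomials and $d_1,d_2$ monic polynomials with nonzero constant terms (or zero) such that $d_1\mid d_2$; these $d_1,d_2$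 are the invariant polynomials of $A$. *)

From HB Require Import structures.
From mathcomp Require Import all_boot all_order all_algebra.
From mathcomp Require Import boolp reals.
From mathcomp Require Import complex.
From Stdlib Require Import ClassicalEpsilon.

Set Implicit Arguments.
Unset Strict Implicit.
Unset Printing Implicit Defensive.

Import Order.TTheory GRing.Theory Num.Theory.
Local Open Scope ring_scope.

Section Laurent.
Variable C : numClosedFieldType.

(* A Laurent polynomial u(z) = sum_k u(k) z^k over C is modelled by the
   function it induces on C \ {0}; values at z = 0 are irrelevant and every
   statement below only looks at z != 0.  [laurent_repr u p n] says
   u(z) = z^{-n} p(z) on C \ {0}. *)
Definition laurent_repr (u : C -> C) (p : {poly C}) (n : nat) : Prop :=
  forall z : C, z != 0 -> u z = p.[z] / z ^+ n.

Definition is_laurent (u : C -> C) : Prop :=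
  exists (p : {poly C}) (n : nat), laurent_repr u p n.

(* A "type" is +- z^m, encoded as (b, m) meaning (-1)^b z^m. *)
Definition sym_type := (bool * int)%type.

Definition has_type (u : C -> C) (t : sym_type) : Prop :=
  forall z : C, z != 0 -> u z = (-1) ^+ t.1 * z ^ t.2 * u z^-1.

Definition has_symmetry (u : C -> C) : Prop := exists t, has_type u t.

Definition type_div (tau rho : sym_type) : sym_type :=
  (tau.1 (+) rho.1, rho.2 - tau.2).

Definition laurent_mx m n (A : 'M[C -> C]_(m, n)) : Prop :=
  forall i j, is_laurent (A i j).

Definition mxev m n (A : 'M[C -> C]_(m, n)) (z : C) : 'M[C]_(m, n) :=
  \matrix_(i, j) A i j z.

Definition compat_sym m n (A : 'M[C -> C]_(m, n)) : Prop :=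
  exists (tau : 'I_m -> sym_type) (rho : 'I_n -> sym_type),
    forall i j, has_type (A i j) (type_div (tau i) (rho j)).

Definition compat_prod3 m0 m1 m2 m3 (P1 : 'M[C -> C]_(m0, m1))
    (P2 : 'M[C -> C]_(m1, m2)) (P3 : 'M[C -> C]_(m2, m3)) : Prop :=
  exists (t0 : 'I_m0 -> sym_type) (t1 : 'I_m1 -> sym_type)
         (t2 : 'I_m2 -> sym_type) (t3 : 'I_m3 -> sym_type),
    [/\ forall i j, has_type (P1 i j) (type_div (t0 i) (t1 j)),
        forall i j, has_type (P2 i j) (type_div (t1 i) (t2 j))
      & forall i j, has_type (P3 i j) (type_div (t2 i) (t3 j))].

Definition strongly_inv n (P : 'M[C -> C]_n) : Prop :=
  exists (a : C) (k : int), a != 0 /\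
    forall z : C, z != 0 -> \det (mxev P z) = a * z ^ k.

Definition diag2 (a b : C) : 'M[C]_2 :=
  \matrix_(i, j) (if i == j then (if i == 0 then a else b) else 0).

(* Z(u, z0): multiplicity of z0 as a zero of u; None stands for +infinity
   (u = 0).  It is computed from any nonzero representation u = z^{-n} p. *)
Definition lnum (u : C -> C) : {poly C} :=
  epsilon (inhabits 0)
    (fun p : {poly C} => p != 0 /\ exists n : nat, laurent_repr u p n).

Definition Zmult (u : C -> C) (z0 : C) : option nat :=
  if `[< exists (p : {poly C}) (n : nat), p != 0 /\ laurent_repr u p n >]
  then Some (mup z0 (lnum u)) else None.

Definition lpoly (d : {poly C}) : C -> C := fun z => d.[z].

Definition inv_poly_ok (d : {poly C}) : bool :=
  ((d \is monic) && (d`_0 != 0)) || (d == 0).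

(* A = E diag(d1, d2) F is a Smith normal form; d1, d2 are then the
   invariant polynomials of A. *)
Definition smith_form (A E F : 'M[C -> C]_2) (d1 d2 : {poly C}) : Prop :=
  [/\ laurent_mx E, laurent_mx F, strongly_inv E & strongly_inv F] /\
  [/\ inv_poly_ok d1, inv_poly_ok d2, d1 %| d2
    & forall z : C, z != 0 ->
        mxev A z = mxev E z *m diag2 d1.[z] d2.[z] *m mxev F z].

Definition mset2_eq (T : Type) (a b c d : T) : Prop :=
  (a = c /\ b = d) \/ (a = d /\ b = c).

End Laurent.

(* In the ring of Laurent polynomials, the gcd g of two entries u, v of a row
   with compatible symmetry is itself symmetric, and averaging its Bezout
   coefficients with their reflections under z -> 1/z yields symmetric ones.
   This gives a strongly invertible, symmetry-compatible column operation
   turning (u, v) into (g, 0). Alternating such operations on the first row and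
   the first column replaces the corner entry by a proper divisor, which lowers
   its length (the span of its exponents), until the corner divides the rest of
   its column; one more row operation then yields a diagonal matrix. Finally,
   diag(e1, e2) and diag(d1, d2) differ by strongly invertible factors on both
   sides, so at every z0 <> 0 the powers of (z - z0) dividing both e1 and e2
   are those dividing d1, while e1 e2 is d1 d2 times a unit: the multiplicities
   agree as multisets. *)

From HB Require Import structures.
From mathcomp Require Import all_boot all_order all_algebra.
From mathcomp Require Import boolp reals complex.
From mathcomp Require Import perm ring zify.
From Stdlib Require Import ClassicalEpsilon.
Import Order.TTheory GRing.Theory Num.Theory.
Local Open Scope ring_scope.
Set Implicit Arguments.
Unset Strict Implicit.
Unset Printing Implicit Defensive.

(** * Laurent polynomials *)

Section LaurentFunctions.
Variable C : numClosedFieldType.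
Implicit Types (f g u v w : C -> C) (p q : {poly C}).

Definition eq_punct u v := forall z : C, z != 0 -> u z = v z.

Lemma eq_poly_punct p q : (forall z : C, z != 0 -> p.[z] = q.[z]) -> p = q.
Proof.
move=> E; apply/eqP; rewrite -subr_eq0; apply/negPn/negP => nz.
pose rs := [seq i.+1%:R | i <- iota 0 (size (p - q))] : seq C.
have roots : all (root (p - q)) rs.
  by apply/allP => _ /mapP[i _ ->]; rewrite /root hornerD hornerN E ?subrr ?pnatr_eq0.
have : uniq rs.
  by rewrite map_inj_uniq ?iota_uniq // => i j /eqP; rewrite eqr_nat => /eqP[].
by move/(max_poly_roots nz roots); rewrite size_map size_iota ltnn.
Qed.

Lemma laurent_reprMXn u p n m :
  laurent_repr u p n -> laurent_repr u (p * 'X^m) (n + m).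
Proof.
move=> Hu z z0; rewrite Hu // hornerM hornerXn exprD invfM mulrACA divff ?mulr1 //.
exact: expf_neq0.
Qed.

Lemma laurent_repr_mul u v p q n m :
  laurent_repr u p n -> laurent_repr v q m ->
  laurent_repr (fun z => u z * v z) (p * q) (n + m).
Proof. by move=> Hu Hv z z0; rewrite Hu // Hv // hornerM exprD invfM mulrACA. Qed.

Lemma laurent_repr_eq u p n q m :
  laurent_repr u p n -> laurent_repr u q m -> p * 'X^m = q * 'X^n.
Proof.
move=> Hp Hq; apply: eq_poly_punct => z z0.
apply: (divIf (expf_neq0 (n + m) z0)).
by rewrite -(laurent_reprMXn m Hp) // addnC -(laurent_reprMXn n Hq).
Qed.

Lemma laurent_repr_eq0 u p n :
  laurent_repr u p n -> eq_punct u (fun _ => 0) <-> p = 0.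
Proof.
move=> Hu; split=> [u0|p0]; last by move=> z z0; rewrite Hu // p0 horner0 mul0r.
apply: eq_poly_punct => z z0; apply: (divIf (expf_neq0 n z0)).
by rewrite -Hu // u0 // horner0 mul0r.
Qed.

Lemma laurent_repr_neq0 u : is_laurent u -> ~ eq_punct u (fun _ => 0) ->
  exists p n, p != 0 /\ laurent_repr u p n.
Proof.
move=> [p [n Hu]] nz; exists p, n; split=> //.
by apply/eqP => p0; apply/nz/(laurent_repr_eq0 Hu).
Qed.

Lemma laurent_ext u v : is_laurent v -> eq_punct u v -> is_laurent u.
Proof. by move=> [p [n Hv]] E; exists p, n => z z0; rewrite E // Hv. Qed.

Lemma laurent_poly p : is_laurent (lpoly p).
Proof. by exists p, 0%N => z _; rewrite expr0 divr1. Qed.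

Lemma laurent_cst (c : C) : is_laurent (fun _ : C => c).
Proof. by apply: laurent_ext (laurent_poly c%:P) _ => z _; rewrite /lpoly hornerC. Qed.

Lemma laurent_expz (k : int) : is_laurent (fun z : C => z ^ k).
Proof.
case: k => n; first by exists 'X^n, 0%N => z _; rewrite hornerXn expr0 divr1.
by exists 1, n.+1 => z _; rewrite hornerC div1r.
Qed.

Lemma laurent_add u v :
  is_laurent u -> is_laurent v -> is_laurent (fun z => u z + v z).
Proof.
move=> [p [n Hu]] [q [m Hv]]; exists (p * 'X^m + q * 'X^n), (n + m)%N => z z0.
by rewrite (laurent_reprMXn m Hu) // (laurent_reprMXn n Hv) // [(m + n)%N]addnC
  hornerD mulrDl.
Qed.

Lemma laurent_opp u : is_laurent u -> is_laurent (fun z => - u z).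
Proof. by move=> [p [n Hu]]; exists (- p), n => z z0; rewrite Hu // hornerN mulNr. Qed.

Lemma laurent_mul u v :
  is_laurent u -> is_laurent v -> is_laurent (fun z => u z * v z).
Proof. by move=> [p [n Hu]] [q [m Hv]]; exists (p * q), (n + m)%N; apply: laurent_repr_mul. Qed.

Lemma laurent_sum (I : Type) (r : seq I) (P : pred I) (F : I -> C -> C) :
  (forall i, is_laurent (F i)) -> is_laurent (fun z => \sum_(i <- r | P i) F i z).
Proof.
move=> LF; elim: r => [|i r IH].
  by apply: laurent_ext (laurent_cst 0) _ => z _; rewrite big_nil.
case Pi: (P i).
  by apply: laurent_ext (laurent_add (LF i) IH) _ => z _; rewrite big_cons Pi.
by apply: laurent_ext IH _ => z _; rewrite big_cons Pi.
Qed.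

Lemma laurent_prod (I : Type) (r : seq I) (P : pred I) (F : I -> C -> C) :
  (forall i, is_laurent (F i)) -> is_laurent (fun z => \prod_(i <- r | P i) F i z).
Proof.
move=> LF; elim: r => [|i r IH].
  by apply: laurent_ext (laurent_cst 1) _ => z _; rewrite big_nil.
case Pi: (P i).
  by apply: laurent_ext (laurent_mul (LF i) IH) _ => z _; rewrite big_cons Pi.
by apply: laurent_ext IH _ => z _; rewrite big_cons Pi.
Qed.

Lemma laurent_comp_inv u : is_laurent u -> is_laurent (fun z => u z^-1).
Proof.
move=> [p [n Hu]].
have Lsum : is_laurent (fun z => \sum_(i < size p) p`_i * z ^ (- i%:Z)).
  by apply: laurent_sum => i; apply: laurent_mul (laurent_cst _) (laurent_expz _).
apply: laurent_ext (laurent_mul Lsum (laurent_expz n)) _ => z z0.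
rewrite Hu ?invr_eq0 // horner_coef exprVn invrK.
by congr (_ * _); apply: eq_bigr => i _; rewrite -exprz_inv.
Qed.

Lemma laurent_mul_eq0 u v : is_laurent u -> is_laurent v ->
  eq_punct (fun z => u z * v z) (fun _ => 0) ->
  eq_punct u (fun _ => 0) \/ eq_punct v (fun _ => 0).
Proof.
move=> [p [n Hu]] [q [m Hv]] /(laurent_repr_eq0 (laurent_repr_mul Hu Hv)) /eqP.
rewrite mulf_eq0 => /orP[] /eqP.
  by left; apply/(laurent_repr_eq0 Hu).
by right; apply/(laurent_repr_eq0 Hv).
Qed.

Lemma laurent_mulIf u1 u2 w :
  is_laurent u1 -> is_laurent u2 -> is_laurent w -> ~ eq_punct w (fun _ => 0) ->
  eq_punct (fun z => u1 z * w z) (fun z => u2 z * w z) -> eq_punct u1 u2.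
Proof.
move=> L1 L2 Lw w0 E.
have Ld : is_laurent (fun z => u1 z - u2 z) := laurent_add L1 (laurent_opp L2).
case: (laurent_mul_eq0 Ld Lw) => [z z0|D z z0|//]; first by rewrite /= mulrBl E ?subrr.
by apply/eqP; rewrite -subr_eq0 D.
Qed.

Definition dvdL f u := exists2 w, is_laurent w & eq_punct u (fun z => f z * w z).

Lemma dvdL_ext f u v : dvdL f v -> eq_punct u v -> dvdL f u.
Proof. by move=> [w Lw Ev] E; exists w => // z z0; rewrite E // Ev. Qed.

Lemma dvdL0 f : dvdL f (fun _ => 0).
Proof. by exists (fun _ => 0) => [|z _]; rewrite ?mulr0 //; apply: laurent_cst. Qed.

Lemma dvdL_trans g f u : dvdL f g -> dvdL g u -> dvdL f u.
Proof.
move=> [w1 L1 E1] [w2 L2 E2]; exists (fun z => w1 z * w2 z); first exact: laurent_mul.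
by move=> z z0; rewrite E2 // E1 // mulrA.
Qed.

Lemma dvdL_add f u v : dvdL f u -> dvdL f v -> dvdL f (fun z => u z + v z).
Proof.
move=> [a La Ea] [b Lb Eb]; exists (fun z => a z + b z); first exact: laurent_add.
by move=> z z0; rewrite /= Ea // Eb // mulrDr.
Qed.

Lemma dvdL_mull f u w : is_laurent w -> dvdL f u -> dvdL f (fun z => w z * u z).
Proof.
move=> Lw [a La Ea]; exists (fun z => w z * a z); first exact: laurent_mul.
by move=> z z0; rewrite /= Ea // mulrCA.
Qed.

Lemma dvdL_mulr f u w : is_laurent w -> dvdL f u -> dvdL f (fun z => u z * w z).
Proof. by move=> Lw du; apply: dvdL_ext (dvdL_mull Lw du) _ => z _; rewrite mulrC. Qed.

Lemma dvdL_sum f (I : Type) (r : seq I) (P : pred I) (F : I -> C -> C) :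
  (forall i, dvdL f (F i)) -> dvdL f (fun z => \sum_(i <- r | P i) F i z).
Proof.
move=> dF; elim: r => [|i r IH]; first by apply: dvdL_ext (dvdL0 f) _ => z _; rewrite big_nil.
case Pi: (P i).
  by apply: dvdL_ext (dvdL_add (dF i) IH) _ => z _; rewrite big_cons Pi.
by apply: dvdL_ext IH _ => z _; rewrite big_cons Pi.
Qed.

Lemma laurent_unit_monomial u : is_laurent u -> dvdL u (fun _ => 1) ->
  exists2 c : C, c != 0 & exists k : int, eq_punct u (fun z => c * z ^ k).
Proof.
move=> [p [n Hu]] [w [q [m Hw]] E].
have Huw : laurent_repr (fun z => u z * w z) 1 0 by move=> z z0; rewrite -E // hornerC divr1.
have pq : p * q = ('X - 0%:P) ^+ (n + m).
  by have := laurent_repr_eq (laurent_repr_mul Hu Hw) Huw; rewrite expr0 mulr1 mul1r subr0.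
have /dvdp_exp_XsubCP[k _] : p %| ('X - 0%:P) ^+ (n + m) by rewrite -pq dvdp_mulr.
rewrite subr0 => /eqpP[[c1 c2] /andP[c10 c20] /= pk].
exists (c2 / c1); first by rewrite mulf_neq0 ?invr_eq0.
have {}pk : p = (c2 / c1) *: 'X^k.
  by apply: (scalerI c10); rewrite pk scalerA mulrCA divff ?mulr1.
exists (k%:Z - n%:Z) => z z0.
by rewrite Hu // pk hornerZ hornerXn expfzDr // -exprnN mulrA.
Qed.

Lemma laurent_bezout u v : is_laurent u -> is_laurent v ->
  exists g u' v' a b : C -> C,
    [/\ is_laurent g, is_laurent u', is_laurent v', is_laurent a & is_laurent b] /\
    [/\ eq_punct u (fun z => g z * u' z), eq_punct v (fun z => g z * v' z)
      & eq_punct (fun z => a z * u' z + b z * v' z) (fun _ => 1)].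
Proof.
move=> [p [n Hu]] [q [m Hv]].
move: (laurent_reprMXn m Hu) (laurent_reprMXn n Hv); rewrite [(m + n)%N]addnC.
set P := p * _; set Q := q * _; set N := (n + m)%N => HP HQ.
have [/andP[/eqP P0 /eqP Q0]|PQ] := boolP ((P == 0) && (Q == 0)).
  exists (fun _ => 0), (fun _ => 1), (fun _ => 0), (fun _ => 1), (fun _ => 0).
  split; first by split; apply: laurent_cst.
  by split=> z z0 /=; rewrite ?(HP z z0) ?(HQ z z0) ?P0 ?Q0 ?horner0; ring.
have /Bezout_eq1_coprimepP[[r s] /= rs1] : coprimep (P %/ gcdp P Q) (Q %/ gcdp P Q).
  by apply: coprimep_div_gcd; rewrite -negb_and.
exists (fun z => (gcdp P Q).[z] / z ^+ N), (lpoly (P %/ gcdp P Q)),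
  (lpoly (Q %/ gcdp P Q)), (lpoly r), (lpoly s).
split; first by split; [exists (gcdp P Q), N | exact: laurent_poly ..].
split=> z z0 /=.
- by rewrite HP // -{1}(divpK (dvdp_gcdl P Q)) hornerM /lpoly; ring.
- by rewrite HQ // -{1}(divpK (dvdp_gcdr P Q)) hornerM /lpoly; ring.
- by rewrite /lpoly -!hornerM -hornerD rs1 hornerC.
Qed.

(* The number of coefficients from the lowest to the highest nonzero one: the
   size of a Laurent polynomial up to units, which are the monomials. *)
Definition poly_width p := (size p - mup 0 p)%N.

Lemma mup0_lt_size p : p != 0 -> (mup 0 p < size p)%N.
Proof.
move=> p0; have : ('X - 0%:P) ^+ mup 0 p %| p by rewrite -mup_geq.
by move/(dvdp_leq p0); rewrite size_exp_XsubC.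
Qed.

Lemma poly_width_gt0 p : p != 0 -> (0 < poly_width p)%N.
Proof. by move/mup0_lt_size; rewrite /poly_width subn_gt0. Qed.

Lemma poly_widthMXn p m : p != 0 -> poly_width (p * 'X^m) = poly_width p.
Proof.
move=> p0; have Xm0 : ('X^m : {poly C}) != 0 by rewrite monic_neq0 ?monicXn.
have XmE : 'X^m = ('X - 0%:P) ^+ m :> {poly C} by rewrite subr0.
rewrite /poly_width size_mulXn // mupM // XmE mup_XsubCX eqxx.
by rewrite addnC subnDr.
Qed.

Lemma poly_widthM p q : p != 0 -> q != 0 ->
  poly_width (p * q) = (poly_width p + poly_width q).-1.
Proof.
move=> p0 q0; rewrite /poly_width size_mul // mupM //.
move: (mup0_lt_size p0) (mup0_lt_size q0).
by set a := mup 0 p; set b := mup 0 q; set sp := size p; set sq := size q; lia.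
Qed.

Lemma poly_width_eq1 p : p != 0 -> poly_width p = 1%N ->
  exists2 c, c != 0 & p = c *: 'X^(mup 0 p).
Proof.
move=> p0 w1; have : ('X - 0%:P) ^+ mup 0 p %| p by rewrite -mup_geq.
rewrite subr0 => /dvdpP[s ps].
have s0 : s != 0 by apply: contra_neq p0 => s0; rewrite ps s0 mul0r.
have /size_poly1P[c c0 sc] : size s == 1%N.
  by move: w1; rewrite /poly_width {1}ps size_mulXn // addKn => ->.
by exists c; rewrite // {1}ps sc mul_polyC.
Qed.

Lemma lnum_spec u : (exists p n, p != 0 /\ laurent_repr u p n) ->
  lnum u != 0 /\ exists n, laurent_repr u (lnum u) n.
Proof.
move=> [p [n [p0 Hu]]].
by apply: (epsilon_spec (inhabits 0) (fun p => p != 0 /\ exists n, laurent_repr u p n));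
  exists p; split=> //; exists n.
Qed.

Lemma laurent_repr_ext u v : eq_punct u v -> laurent_repr u = laurent_repr v.
Proof.
move=> E; apply: funext => p; apply: funext => n; apply: propext.
by split=> H z z0; [rewrite -E // H | rewrite E // H].
Qed.

Lemma lnum_ext u v : eq_punct u v -> lnum u = lnum v.
Proof. by move=> E; rewrite /lnum (laurent_repr_ext E). Qed.

Definition llength u := poly_width (lnum u).

Lemma llength_repr u p n : p != 0 -> laurent_repr u p n -> llength u = poly_width p.
Proof.
move=> p0 Hu; have [q0 [m Hq]] := lnum_spec (ex_intro _ p (ex_intro _ n (conj p0 Hu))).
by rewrite /llength -(poly_widthMXn n q0) -(laurent_repr_eq Hu Hq) poly_widthMXn.
Qed.

Lemma llength_gt0 u : is_laurent u -> ~ eq_punct u (fun _ => 0) -> (0 < llength u)%N.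
Proof.
by move=> Lu /(laurent_repr_neq0 Lu)[p [n [p0 Hu]]]; rewrite (llength_repr p0 Hu) poly_width_gt0.
Qed.

Lemma llengthM u v : is_laurent u -> is_laurent v ->
  ~ eq_punct u (fun _ => 0) -> ~ eq_punct v (fun _ => 0) ->
  llength (fun z => u z * v z) = (llength u + llength v).-1.
Proof.
move=> Lu Lv /(laurent_repr_neq0 Lu)[p [n [p0 Hu]]] /(laurent_repr_neq0 Lv)[q [m [q0 Hv]]].
rewrite (llength_repr p0 Hu) (llength_repr q0 Hv) -poly_widthM //.
exact: llength_repr (mulf_neq0 p0 q0) (laurent_repr_mul Hu Hv).
Qed.

Lemma llength_eq1 u : is_laurent u -> ~ eq_punct u (fun _ => 0) ->
  llength u = 1%N -> dvdL u (fun _ => 1).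
Proof.
move=> Lu /(laurent_repr_neq0 Lu)[p [n [p0 Hu]]].
rewrite (llength_repr p0 Hu) => /(poly_width_eq1 p0)[c c0].
set k := mup 0 p => pc.
exists (fun z => c^-1 * z ^ (n%:Z - k%:Z)).
  exact: laurent_mul (laurent_cst _) (laurent_expz _).
move=> z z0; rewrite Hu // pc hornerZ hornerXn expfzDr // -exprnN -exprnP.
by field; rewrite c0 !expf_neq0.
Qed.

Lemma llength_proper_dvd g u : is_laurent g -> is_laurent u ->
  ~ eq_punct u (fun _ => 0) -> dvdL g u -> ~ dvdL u g -> (llength g < llength u)%N.
Proof.
move=> Lg Lu u0 [w Lw Ew] ndvd.
have g0 : ~ eq_punct g (fun _ => 0) by move=> g0; apply: u0 => z z0; rewrite Ew // g0 ?mul0r.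
have w0 : ~ eq_punct w (fun _ => 0) by move=> w0; apply: u0 => z z0; rewrite Ew // w0 ?mulr0.
have w_gt1 : (1 < llength w)%N.
  rewrite ltn_neqAle llength_gt0 // andbT eq_sym.
  apply/eqP => /(llength_eq1 Lw w0)[w' Lw' E].
  by apply: ndvd; exists w' => // z z0; rewrite Ew // -mulrA -E // mulr1.
have -> : llength u = llength (fun z => g z * w z) by rewrite /llength (lnum_ext Ew).
rewrite llengthM //.
by move: (llength_gt0 Lg g0) w_gt1; lia.
Qed.

End LaurentFunctions.

(** * Symmetry types *)

Section SymmetryTypes.
Variable C : numClosedFieldType.
Implicit Types (t r : sym_type).

Definition type_fun t (z : C) : C := (-1) ^+ t.1 * z ^ t.2.

Definition type_mul t r : sym_type := (t.1 (+) r.1, t.2 + r.2).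

Definition type_inv t : sym_type := (t.1, - t.2).

Lemma type_mulC : commutative type_mul.
Proof. by move=> t r; rewrite /type_mul addbC addrC. Qed.

Lemma type_invK : involutive type_inv.
Proof. by case=> b k; rewrite /type_inv opprK. Qed.

Lemma type_fun_neq0 t z : z != 0 -> type_fun t z != 0.
Proof. by move=> z0; rewrite mulf_neq0 ?signr_eq0 ?expfz_neq0. Qed.

Lemma type_funM t r z : z != 0 -> type_fun (type_mul t r) z = type_fun t z * type_fun r z.
Proof. by move=> z0; rewrite /type_fun signr_addb expfzDr // mulrACA. Qed.

Lemma type_funV t z : type_fun (type_inv t) z = (type_fun t z)^-1.
Proof. by rewrite /type_fun invr_signM invr_expz. Qed.

Lemma type_fun_inv t z : type_fun t z^-1 = (type_fun t z)^-1.
Proof. by rewrite /type_fun invr_signM exprz_inv invr_expz. Qed.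

Lemma type_fun_div t r z : z != 0 -> type_fun (type_div t r) z = type_fun r z / type_fun t z.
Proof.
move=> z0; rewrite -type_funV -type_funM //.
by rewrite /type_div /type_mul /type_inv addbC addrC.
Qed.

Lemma laurent_type_fun t : is_laurent (type_fun t).
Proof. by apply: laurent_ext (laurent_mul (laurent_cst _) (laurent_expz _ t.2)) _ => z _. Qed.

Lemma laurent_type_funV t : is_laurent (fun z => (type_fun t z)^-1).
Proof. by apply: laurent_ext (laurent_type_fun (type_inv t)) _ => z _; rewrite type_funV. Qed.

End SymmetryTypes.

Ltac solve_laurent := repeat first
  [ assumption
  | apply: laurent_cst
  | apply: laurent_expz
  | apply: laurent_type_fun
  | apply: laurent_type_funV
  | apply: laurent_add
  | apply: laurent_opp
  | apply: laurent_mul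
  | apply: laurent_comp_inv ].

Section SymmetricGcd.
Variable C : numClosedFieldType.
Implicit Types (t r s : sym_type) (u v w g a b : C -> C).

Definition has_type_div t r u :=
  forall z : C, z != 0 -> type_fun t z * u z = type_fun r z * u z^-1.

Lemma has_type_divP t r u : has_type u (type_div t r) <-> has_type_div t r u.
Proof.
have E z : z != 0 -> (-1) ^+ (type_div t r).1 * z ^ (type_div t r).2 =
    type_fun r z / type_fun t z by exact: type_fun_div.
split=> H z z0; have tz := type_fun_neq0 t z0.
  by rewrite H // E //; field.
by apply: (mulfI tz); rewrite H // E //; field.
Qed.

Lemma has_type_div_inv t r u z : z != 0 -> has_type_div t r u ->
  u z^-1 = type_fun t z / type_fun r z * u z.
Proof.
move=> z0 Hu; have rz := type_fun_neq0 r z0.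
by apply: (mulfI rz); rewrite -Hu //; field.
Qed.

Lemma has_type_divE t r u z : z != 0 -> has_type_div t r u ->
  u z = type_fun r z / type_fun t z * u z^-1.
Proof.
move=> z0 Hu; have tz := type_fun_neq0 t z0.
by apply: (mulfI tz); rewrite Hu //; field.
Qed.

Lemma has_type_div_swap t r u :
  has_type_div t r u -> has_type_div (type_inv r) (type_inv t) u.
Proof.
move=> Hu z z0; have tz := type_fun_neq0 t z0; have rz := type_fun_neq0 r z0.
by rewrite !type_funV (has_type_div_inv z0 Hu); field; rewrite tz rz.
Qed.

Lemma has_type_divN t r u : has_type_div t r u -> has_type_div t r (fun z => - u z).
Proof. by move=> Hu z z0; rewrite !mulrN Hu. Qed.

Lemma has_type_div1 t : has_type_div t t (fun _ => 1).
Proof. by []. Qed.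

Lemma has_type_div0 t r : has_type_div t r (fun _ => 0).
Proof. by move=> z _; rewrite !mulr0. Qed.

Lemma has_type_divM t r s u v :
  has_type_div t r u -> has_type_div r s v -> has_type_div t s (fun z => u z * v z).
Proof.
move=> Hu Hv z z0.
by rewrite mulrA Hu // mulrAC Hv // -mulrA [_ * u _]mulrC.
Qed.

Lemma has_type_div_exchange s r q u : has_type_div s r u ->
  has_type_div q (type_mul (type_mul q r) (type_inv s)) u.
Proof.
move=> Hu z z0; have sz := type_fun_neq0 s z0; have rz := type_fun_neq0 r z0.
by rewrite !type_funM // type_funV (has_type_div_inv z0 Hu); field; rewrite sz rz.
Qed.

Lemma has_symmetry_type_div t g : has_symmetry g -> exists s, has_type_div t s g.
Proof. by move=> [gam Hg]; exists (type_mul t gam) => z z0; rewrite type_funM // Hg // mulrA. Qed.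

Lemma has_type_div_cancel_l t s r g w u :
  is_laurent g -> is_laurent w -> ~ eq_punct g (fun _ => 0) ->
  has_type_div t s g -> has_type_div t r u -> eq_punct u (fun z => g z * w z) ->
  has_type_div s r w.
Proof.
move=> Lg Lw g0 Hg Hu Eu.
have gs0 : ~ eq_punct (fun z => g z^-1) (fun _ => 0).
  by move=> gs0; apply: g0 => z z0; rewrite -[z]invrK gs0 ?invr_eq0.
apply: (laurent_mulIf _ _ (laurent_comp_inv Lg) gs0) => [||z z0 /=]; try solve_laurent.
transitivity (type_fun t z * u z); first by rewrite Eu // mulrA Hg //; ring.
by rewrite Hu // Eu ?invr_eq0 //; ring.
Qed.

Lemma has_type_div_cancel_r t s r g w u :
  is_laurent g -> is_laurent w -> ~ eq_punct g (fun _ => 0) ->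
  has_type_div s r g -> has_type_div t r u -> eq_punct u (fun z => g z * w z) ->
  has_type_div t s w.
Proof.
move=> Lg Lw g0 /has_type_div_swap Hg /has_type_div_swap Hu Eu.
rewrite -[t]type_invK -[s]type_invK.
exact/has_type_div_swap/(has_type_div_cancel_l Lg Lw g0 Hg Hu Eu).
Qed.

Lemma gcd_has_symmetry t r1 r2 u v g u' v' a b :
  is_laurent g -> is_laurent u' -> is_laurent v' -> is_laurent a -> is_laurent b ->
  has_type_div t r1 u -> has_type_div t r2 v ->
  eq_punct u (fun z => g z * u' z) -> eq_punct v (fun z => g z * v' z) ->
  eq_punct (fun z => a z * u' z + b z * v' z) (fun _ => 1) ->
  ~ eq_punct g (fun _ => 0) -> has_symmetry g.
Proof.
move=> Lg Lu' Lv' La Lb Hu Hv Eu Ev Eab g0.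
(* Expanding g = a u + b v with the symmetries of u and v gives
   g(z) = k(z) g(1/z); then k(z) k(1/z) = 1 forces k = +-z^m. *)
pose k z := type_fun r1 z / type_fun t z * u' z^-1 * a z +
            type_fun r2 z / type_fun t z * v' z^-1 * b z.
have Lk : is_laurent k by rewrite /k; solve_laurent.
have Eg z : z != 0 -> g z = k z * g z^-1.
  move=> z0; have zi : z^-1 != 0 by rewrite invr_eq0.
  have tz := type_fun_neq0 t z0.
  rewrite -[g z]mulr1 -(Eab z z0) /= /k.
  transitivity (a z * u z + b z * v z); first by rewrite Eu // Ev //; ring.
  by rewrite (has_type_divE z0 Hu) (has_type_divE z0 Hv) Eu // Ev //; field.
clearbody k.
have kk : eq_punct (fun _ => 1) (fun z => k z * k z^-1).
  apply: (laurent_mulIf (laurent_cst 1) (laurent_mul Lk (laurent_comp_inv Lk)) Lg g0) => z z0 /=.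
  by rewrite mul1r [in LHS]Eg // (Eg z^-1) ?invr_eq0 // invrK; ring.
have [c c0 [m Ek]] := laurent_unit_monomial Lk (ex_intro2 _ _ _ (laurent_comp_inv Lk) kk).
have c2 : c ^+ 2 = 1.
  by have := kk 1 (oner_neq0 _); rewrite /= invr1 Ek ?oner_neq0 // exp1rz mulr1 expr2 => ->.
have sc : (-1) ^+ (c == -1) = c.
  case: eqP => [->|c_neq]; first exact: expr1.
  by move/eqP: c2; rewrite expr0 sqrf_eq1 => /orP[/eqP->|/eqP].
by exists (c == -1, m) => z z0; rewrite Eg // Ek // sc.
Qed.

Lemma sym_bezout s r1 r2 u v a b :
  is_laurent a -> is_laurent b -> has_type_div s r1 u -> has_type_div s r2 v ->
  eq_punct (fun z => a z * u z + b z * v z) (fun _ => 1) ->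
  exists a' b', [/\ is_laurent a', is_laurent b', has_type_div r1 s a',
    has_type_div r2 s b' & eq_punct (fun z => a' z * u z + b' z * v z) (fun _ => 1)].
Proof.
move=> La Lb Hu Hv Eab.
have two0 : (2 : C) != 0 by rewrite pnatr_eq0.
(* Averaging with the reflection under z -> 1/z symmetrizes a coefficient, and
   by the symmetry of u and v the Bezout identity survives. *)
pose sym_part (r : sym_type) (f : C -> C) (z : C) :=
  (f z + type_fun s z / type_fun r z * f z^-1) / 2.
have Lsym r f : is_laurent f -> is_laurent (sym_part r f).
  by move=> Lf; rewrite /sym_part; solve_laurent.
have Hsym r f : has_type_div r s (sym_part r f).
  move=> z z0; have rz := type_fun_neq0 r z0; have sz := type_fun_neq0 s z0.
  by rewrite /sym_part invrK !type_fun_inv; field; rewrite rz sz.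
exists (sym_part r1 a), (sym_part r2 b); split; [exact: Lsym | exact: Lsym | by [] | by [] |].
move=> z z0; have zi : z^-1 != 0 by rewrite invr_eq0.
have r1z := type_fun_neq0 r1 z0; have r2z := type_fun_neq0 r2 z0.
transitivity ((a z * u z + b z * v z + (a z^-1 * u z^-1 + b z^-1 * v z^-1)) / 2).
  rewrite /sym_part (has_type_div_inv z0 Hu) (has_type_div_inv z0 Hv).
  by field; rewrite ?two0 ?r1z ?r2z.
by rewrite Eab // Eab //; field.
Qed.

Lemma sym_gcd_bezout t r1 r2 u v :
  is_laurent u -> is_laurent v -> has_type_div t r1 u -> has_type_div t r2 v ->
  exists (g u' v' a b : C -> C) (s : sym_type),
    [/\ is_laurent u', is_laurent v', is_laurent a & is_laurent b] /\
    [/\ eq_punct u (fun z => g z * u' z), eq_punct v (fun z => g z * v' z),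
        has_type_div s r1 u' & has_type_div s r2 v'] /\
    [/\ has_type_div r1 s a, has_type_div r2 s b
      & eq_punct (fun z => a z * u' z + b z * v' z) (fun _ => 1)].
Proof.
move=> Lu Lv Hu Hv.
have [g [u' [v' [a [b [[Lg Lu' Lv' La Lb] [Eu Ev Eab]]]]]]] := laurent_bezout Lu Lv.
have [g0|g0] := classic (eq_punct g (fun _ => 0)).
  exists (fun _ => 0), (fun _ => 1), (fun _ => 0), (fun _ => 1), (fun _ => 0), r1.
  split; first by split; apply: laurent_cst.
  split; first by split; [move=> z z0; rewrite Eu // g0 // !mul0r
    | move=> z z0; rewrite Ev // g0 // !mul0r | exact: has_type_div1 | exact: has_type_div0].
  by split; [exact: has_type_div1 | exact: has_type_div0 | move=> z _; rewrite mulr1 mul0r addr0].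
have [s Hg] := has_symmetry_type_div t (gcd_has_symmetry Lg Lu' Lv' La Lb Hu Hv Eu Ev Eab g0).
have Hu' := has_type_div_cancel_l Lg Lu' g0 Hg Hu Eu.
have Hv' := has_type_div_cancel_l Lg Lv' g0 Hg Hv Ev.
have [a' [b' [La' Lb' Ha' Hb' Eab']]] := sym_bezout La Lb Hu' Hv' Eab.
by exists g, u', v', a', b', s.
Qed.

End SymmetricGcd.

(** * Matrices of Laurent polynomials *)

Lemma ord2E (i : 'I_2) : i = 0 \/ i = 1.
Proof. by case: i => [[|[|//]] Hi]; [left | right]; apply/val_inj. Qed.

Definition mx22 (T : Type) (a b c d : T) : 'M[T]_2 :=
  \matrix_(i, j) if i == 0 then (if j == 0 then a else b) else (if j == 0 then c else d).

Lemma mx22P (T : Type) (P : T -> Prop) a b c d :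
  P a -> P b -> P c -> P d -> forall i j, P (mx22 a b c d i j).
Proof. by move=> Pa Pb Pc Pd i j; rewrite mxE; case: (ord2E i) => ->; case: (ord2E j) => ->. Qed.

Lemma mulmx22E (R : pzSemiRingType) (M N : 'M[R]_2) i j :
  (M *m N) i j = M i 0 * N 0 j + M i 1 * N 1 j.
Proof.
have -> : 1 = lift ord0 (ord0 : 'I_1) by apply/val_inj.
by rewrite mxE !big_ord_recl big_ord0 addr0.
Qed.

Lemma det_mx22 (R : comPzRingType) (M : 'M[R]_2) :
  \det M = M 0 0 * M 1 1 - M 0 1 * M 1 0.
Proof.
rewrite (expand_det_row _ 0) !big_ord_recl big_ord0 addr0 /cofactor !det_mx11 !mxE.
have -> : lift 0 (ord0 : 'I_1) = 1 by apply/val_inj.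
have -> : lift 1 (ord0 : 'I_1) = 0 by apply/val_inj.
by rewrite /= expr0 expr1 mul1r mulN1r mulrN.
Qed.

Lemma is_diag_mx22P (V : nmodType) (M : 'M[V]_2) :
  reflect (M 0 1 = 0 /\ M 1 0 = 0) (is_diag_mx M).
Proof.
apply: (iffP is_diag_mxP) => [D | [M01 M10] i j]; first by split; apply: D.
by case: (ord2E i) => ->; case: (ord2E j) => ->.
Qed.

Section LaurentMatrices.
Variable C : numClosedFieldType.
Implicit Types (a b c d f : C -> C).

Lemma mxev_mx22 a b c d z : mxev (mx22 a b c d) z = mx22 (a z) (b z) (c z) (d z).
Proof. by apply/matrixP => i j; rewrite !mxE; case: (i == 0); case: (j == 0). Qed.

Lemma det_mxev_mx22 a b c d z : \det (mxev (mx22 a b c d) z) = a z * d z - b z * c z.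
Proof. by rewrite mxev_mx22 det_mx22 !mxE. Qed.

Lemma strongly_inv_mx22 a b c d (k : C) : k != 0 ->
  eq_punct (fun z => a z * d z - b z * c z) (fun _ => k) -> strongly_inv (mx22 a b c d).
Proof. by move=> k0 E; exists k, 0; split=> // z z0; rewrite det_mxev_mx22 E // expr0z mulr1. Qed.

Lemma diag2E (x y : C) : diag2 x y = mx22 x 0 0 y.
Proof. by apply/matrixP => i j; rewrite !mxE; case: (ord2E i) => ->; case: (ord2E j) => ->. Qed.

Lemma is_diag_mx22_diag2 (M : 'M[C]_2) : is_diag_mx M -> M = diag2 (M 0 0) (M 1 1).
Proof.
move/is_diag_mx22P=> [M01 M10]; apply/matrixP => i j; rewrite diag2E mxE.
by case: (ord2E i) => ->; case: (ord2E j) => ->.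
Qed.

Definition mulmxL m n p (M : 'M[C -> C]_(m, n)) (N : 'M[C -> C]_(n, p)) :
    'M[C -> C]_(m, p) :=
  \matrix_(i, k) fun z => \sum_j M i j z * N j k z.

Lemma mxev_mulmxL m n p (M : 'M[C -> C]_(m, n)) (N : 'M[C -> C]_(n, p)) z :
  mxev (mulmxL M N) z = mxev M z *m mxev N z.
Proof. by apply/matrixP => i k; rewrite !mxE; apply: eq_bigr => j _; rewrite !mxE. Qed.

Lemma mulmxL22E (M N : 'M[C -> C]_2) i k z :
  mulmxL M N i k z = M i 0 z * N 0 k z + M i 1 z * N 1 k z.
Proof.
by have := congr1 (fun X : 'M[C]_2 => X i k) (mxev_mulmxL M N z); rewrite /= mulmx22E !mxE.
Qed.

Lemma laurent_mulmxL m n p (M : 'M[C -> C]_(m, n)) (N : 'M[C -> C]_(n, p)) :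
  laurent_mx M -> laurent_mx N -> laurent_mx (mulmxL M N).
Proof. by move=> LM LN i k; rewrite mxE; apply: laurent_sum => j; apply: laurent_mul. Qed.

Lemma strongly_inv_mulmxL n (M N : 'M[C -> C]_n) :
  strongly_inv M -> strongly_inv N -> strongly_inv (mulmxL M N).
Proof.
move=> [a [k [a0 dM]]] [b [l [b0 dN]]]; exists (a * b), (k + l); split; first exact: mulf_neq0.
by move=> z z0; rewrite mxev_mulmxL det_mulmx dM // dN // expfzDr // mulrACA.
Qed.

Lemma mxev_tr m n (M : 'M[C -> C]_(m, n)) z : mxev M^T z = (mxev M z)^T.
Proof. by apply/matrixP => i j; rewrite !mxE. Qed.

Lemma laurent_tr m n (M : 'M[C -> C]_(m, n)) : laurent_mx M -> laurent_mx M^T.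
Proof. by move=> LM i j; rewrite mxE. Qed.

Lemma strongly_inv_tr n (M : 'M[C -> C]_n) : strongly_inv M -> strongly_inv M^T.
Proof. by move=> [a [k [a0 dM]]]; exists a, k; split=> // z z0; rewrite mxev_tr det_tr dM. Qed.

Lemma laurent_det n (M : 'M[C -> C]_n) : laurent_mx M -> is_laurent (fun z => \det (mxev M z)).
Proof.
move=> LM; have L : is_laurent (fun z => \sum_(s : 'S_n) (-1) ^+ s * \prod_i M i (s i) z).
  apply: laurent_sum => s; apply: laurent_mul; first exact: laurent_cst.
  by apply: laurent_prod => i; apply: LM.
apply: laurent_ext L _ => z _; rewrite /determinant; apply: eq_bigr => s _.
by congr (_ * _); apply: eq_bigr => i _; rewrite mxE.
Qed.

Lemma laurent_cofactor n (M : 'M[C -> C]_n) i j :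
  laurent_mx M -> is_laurent (fun z => cofactor (mxev M z) i j).
Proof.
move=> LM; have Lminor : laurent_mx (row' i (col' j M)) by move=> k l; rewrite !mxE.
apply: laurent_ext (laurent_mul (laurent_cst ((-1) ^+ (i + j))) (laurent_det Lminor)) _ => z _.
by rewrite /cofactor; congr (_ * \det _); apply/matrixP => k l; rewrite !mxE.
Qed.

Lemma strongly_inv_unitmx n (M : 'M[C -> C]_n) z :
  strongly_inv M -> z != 0 -> mxev M z \in unitmx.
Proof. by move=> [a [k [a0 dM]]] z0; rewrite unitmxE dM // unitfE mulf_neq0 ?expfz_neq0. Qed.

Lemma laurent_invmx n (M : 'M[C -> C]_n) : laurent_mx M -> strongly_inv M ->
  exists2 M', laurent_mx M' & forall z, z != 0 -> mxev M' z = invmx (mxev M z).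
Proof.
move=> LM SM; have [a [k [a0 dM]]] := SM.
exists (\matrix_(i, j) fun z => a^-1 * z ^ (- k) * cofactor (mxev M z) j i).
  move=> i j; rewrite mxE.
  exact: laurent_mul (laurent_mul (laurent_cst _) (laurent_expz _ _)) (laurent_cofactor _ _ LM).
move=> z z0; rewrite /invmx strongly_inv_unitmx //; apply/matrixP => i j.
by rewrite !mxE dM // invfM invr_expz.
Qed.

Lemma strongly_inv_det_unit n (M : 'M[C -> C]_n) :
  strongly_inv M -> dvdL (fun z => \det (mxev M z)) (fun _ => 1).
Proof.
move=> [a [k [a0 dM]]]; exists (fun z => a^-1 * z ^ (- k)).
  exact: laurent_mul (laurent_cst _) (laurent_expz _ _).
by move=> z z1; rewrite dM // -invr_expz mulrACA divff ?mulfV ?mulr1 ?expfz_neq0.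
Qed.

Lemma dvdL_mx_mul m n p q f (X : 'M[C -> C]_(m, n)) (M : 'M[C -> C]_(n, p))
    (Y : 'M[C -> C]_(p, q)) (N : 'M[C -> C]_(m, q)) :
  laurent_mx X -> laurent_mx Y -> (forall i j, dvdL f (M i j)) ->
  (forall z, z != 0 -> mxev N z = mxev X z *m mxev M z *m mxev Y z) ->
  forall i j, dvdL f (N i j).
Proof.
move=> LX LY dM EN i j.
have d : dvdL f (fun z => \sum_l (\sum_k X i k z * M k l z) * Y l j z).
  apply: dvdL_sum => l; apply: dvdL_mulr (LY l j) _.
  by apply: dvdL_sum => k; apply: dvdL_mull (LX i k) (dM k l).
apply: dvdL_ext d _ => z z0.
have := congr1 (fun (A : 'M[C]_(m, q)) => A i j) (EN z z0); rewrite /= mxE => ->.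
rewrite mxE; apply: eq_bigr => l _; rewrite !mxE; congr (_ * _).
by apply: eq_bigr => k _; rewrite !mxE.
Qed.

End LaurentMatrices.

(** * Symmetric diagonalization *)

Section SymmetricDiagonalization.
Variable C : numClosedFieldType.
Implicit Types (a b c d : C -> C).

Definition compat_types m n (M : 'M[C -> C]_(m, n))
    (tau : 'I_m -> sym_type) (rho : 'I_n -> sym_type) :=
  forall i j, has_type_div (tau i) (rho j) (M i j).

Lemma compat_types_sym m n (M : 'M[C -> C]_(m, n)) tau rho :
  compat_types M tau rho -> compat_sym M.
Proof. by move=> CM; exists tau, rho => i j; apply/has_type_divP. Qed.

Lemma compat_types_mx22 a b c d (tau rho : 'I_2 -> sym_type) :
  has_type_div (tau 0) (rho 0) a -> has_type_div (tau 0) (rho 1) b ->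
  has_type_div (tau 1) (rho 0) c -> has_type_div (tau 1) (rho 1) d ->
  compat_types (mx22 a b c d) tau rho.
Proof. by move=> Ha Hb Hc Hd i j; rewrite mxE; case: (ord2E i) => ->; case: (ord2E j) => ->. Qed.

Lemma compat_types_mulmxL m n p (M : 'M[C -> C]_(m, n)) (N : 'M[C -> C]_(n, p)) tau rho sig :
  compat_types M tau rho -> compat_types N rho sig -> compat_types (mulmxL M N) tau sig.
Proof.
move=> CM CN i k z z0; rewrite !mxE !mulr_sumr; apply: eq_bigr => j _.
exact: (has_type_divM (CM i j) (CN j k)).
Qed.

Lemma compat_types_tr m n (M : 'M[C -> C]_(m, n)) tau rho : compat_types M tau rho ->
  compat_types M^T (fun j => type_inv (rho j)) (fun i => type_inv (tau i)).
Proof. by move=> CM i j; rewrite mxE; apply: has_type_div_swap. Qed.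

Lemma sym_col_reduce (A : 'M[C -> C]_2) tau rho :
  laurent_mx A -> compat_types A tau rho ->
  exists Q sig, [/\ laurent_mx Q, strongly_inv Q & compat_types Q rho sig] /\
    [/\ eq_punct (mulmxL A Q 0 1) (fun _ => 0),
      dvdL (mulmxL A Q 0 0) (A 0 0) & dvdL (mulmxL A Q 0 0) (A 0 1)].
Proof.
move=> LA CA.
have [g [u' [v' [a [b [s [[Lu' Lv' La Lb] [[Eu Ev Hu' Hv'] [Ha Hb Eab]]]]]]]]] :=
  sym_gcd_bezout (LA 0 0) (LA 0 1) (CA 0 0) (CA 0 1).
(* Q has determinant -1 and maps the row (g u', g v') to (g, 0). *)
pose Q := mx22 a v' b (fun z => - u' z).
have EQ0 : eq_punct (mulmxL A Q 0 0) g.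
  by move=> z z0; rewrite mulmxL22E !mxE /= Eu // Ev // -[RHS]mulr1 -(Eab z z0) /=; ring.
exists Q, (fun j => if j == 0 then s else type_mul (type_mul (rho 0) (rho 1)) (type_inv s)).
split; split.
- by apply: mx22P; solve_laurent.
- have n1 : (-1 : C) != 0 by rewrite oppr_eq0 oner_eq0.
  apply: (strongly_inv_mx22 n1) => z z0.
  by rewrite -(Eab z z0) /=; ring.
- apply: compat_types_mx22 => //=; first exact: has_type_div_exchange.
  by rewrite [type_mul (rho 0) _]type_mulC; apply: has_type_divN; exact: has_type_div_exchange.
- by move=> z z0; rewrite mulmxL22E !mxE /= Eu // Ev //; ring.
- by exists u' => // z z0; rewrite EQ0 // Eu.
- by exists v' => // z z0; rewrite EQ0 // Ev.
Qed.

Definition sym_diagonalizable (A : 'M[C -> C]_2) tau rho :=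
  exists (P Q : 'M[C -> C]_2) tau' rho',
    [/\ laurent_mx P, laurent_mx Q, strongly_inv P & strongly_inv Q] /\
    [/\ compat_types P tau' tau, compat_types Q rho rho'
      & forall z, z != 0 -> is_diag_mx (mxev P z *m mxev A z *m mxev Q z)].

Lemma sym_diagonalizable_mulr (A Q0 : 'M[C -> C]_2) tau rho sig :
  laurent_mx Q0 -> strongly_inv Q0 -> compat_types Q0 rho sig ->
  sym_diagonalizable (mulmxL A Q0) tau sig -> sym_diagonalizable A tau rho.
Proof.
move=> LQ0 SQ0 CQ0 [P [Q [tau' [rho' [[LP LQ SP SQ] [CP CQ D]]]]]].
exists P, (mulmxL Q0 Q), tau', rho'; split.
  by split=> //; [exact: laurent_mulmxL | exact: strongly_inv_mulmxL].
split; [done | exact: compat_types_mulmxL CQ0 CQ |].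
by move=> z z0; rewrite mxev_mulmxL mulmxA -(mulmxA (mxev P z)) -mxev_mulmxL D.
Qed.

Lemma sym_diagonalizable_tr (A : 'M[C -> C]_2) tau rho :
  sym_diagonalizable A^T (fun j => type_inv (rho j)) (fun i => type_inv (tau i)) ->
  sym_diagonalizable A tau rho.
Proof.
move=> [P [Q [tau' [rho' [[LP LQ SP SQ] [CP CQ D]]]]]].
exists Q^T, P^T, (fun j => type_inv (rho' j)), (fun i => type_inv (tau' i)); split.
  by split; [exact: laurent_tr | exact: laurent_tr
    | exact: strongly_inv_tr | exact: strongly_inv_tr].
split.
- by move=> i j; have := compat_types_tr CQ i j; rewrite /= type_invK.
- by move=> i j; have := compat_types_tr CP i j; rewrite /= type_invK.
move=> z z0; rewrite -is_diag_trmx !mxev_tr !trmx_mul !trmxK mulmxA.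
by have := D z z0; rewrite mxev_tr.
Qed.

Lemma sym_diagonalizable_dvd (A : 'M[C -> C]_2) tau rho :
  laurent_mx A -> compat_types A tau rho ->
  eq_punct (A 0 1) (fun _ => 0) -> ~ eq_punct (A 0 0) (fun _ => 0) ->
  dvdL (A 0 0) (A 1 0) -> sym_diagonalizable A tau rho.
Proof.
move=> LA CA A01 A00 [k Lk Ek].
have Hk : has_type_div (tau 1) (tau 0) k.
  exact: has_type_div_cancel_r (LA 0 0) Lk A00 (CA 0 0) (CA 1 0) Ek.
have n1 : (1 : C) != 0 := oner_neq0 C.
exists (mx22 (fun _ => 1) (fun _ => 0) (fun z => - k z) (fun _ => 1)),
  (mx22 (fun _ => 1) (fun _ => 0) (fun _ => 0) (fun _ => 1)), tau, rho.
split; first split.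
- by apply: mx22P; solve_laurent.
- by apply: mx22P; solve_laurent.
- by apply: (strongly_inv_mx22 n1) => z _ /=; ring.
- by apply: (strongly_inv_mx22 n1) => z _ /=; ring.
split.
- apply: compat_types_mx22; [exact: has_type_div1 | exact: has_type_div0 | | exact: has_type_div1].
  exact: has_type_divN.
- by apply: compat_types_mx22; [exact: has_type_div1 | exact: has_type_div0
    | exact: has_type_div0 | exact: has_type_div1].
move=> z z0; apply/is_diag_mx22P.
by rewrite !mulmx22E !mxev_mx22 !mxE /= A01 // Ek //; split; ring.
Qed.

Lemma sym_diagonalizable_row0 (A : 'M[C -> C]_2) tau rho :
  laurent_mx A -> compat_types A tau rho ->
  eq_punct (A 0 0) (fun _ => 0) -> eq_punct (A 0 1) (fun _ => 0) ->
  sym_diagonalizable A tau rho.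
Proof.
move=> LA CA A00 A01.
pose S := mx22 (fun _ : C => 0 : C) (fun _ => 1) (fun _ => 1) (fun _ => 0).
pose tauS (i : 'I_2) := if i == 0 then tau 1 else tau 0.
have LS : laurent_mx S by apply: mx22P; solve_laurent.
have CS : compat_types S tauS tau.
  by apply: compat_types_mx22; [exact: has_type_div0 | exact: has_type_div1
    | exact: has_type_div1 | exact: has_type_div0].
have [Q [sig [[LQ SQ CQ] [SAQ01 _ _]]]] :=
  sym_col_reduce (laurent_mulmxL LS LA) (compat_types_mulmxL CS CA).
exists S, Q, tauS, sig; split.
  have n1 : (-1 : C) != 0 by rewrite oppr_eq0 oner_eq0.
  by split=> //; apply: (strongly_inv_mx22 n1) => z _ /=; ring.
split=> // z z0; apply/is_diag_mx22P; rewrite -!mxev_mulmxL ![mxev _ _ _ _]mxE.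
split; first exact: SAQ01.
by rewrite !mulmxL22E !mxE /= A00 // A01 //; ring.
Qed.

Lemma sym_diagonalizable_descent (A : 'M[C -> C]_2) tau rho :
  laurent_mx A -> compat_types A tau rho ->
  eq_punct (A 0 1) (fun _ => 0) -> ~ eq_punct (A 0 0) (fun _ => 0) ->
  sym_diagonalizable A tau rho.
Proof.
have [n lt_n] := ubnP (llength (A 0 0)).
elim: n => // n IH in A tau rho lt_n *; move=> LA CA A01 A00.
have [|ndvd] := classic (dvdL (A 0 0) (A 1 0)); first exact: sym_diagonalizable_dvd.
(* Otherwise reduce the first column instead: the new corner is a proper
   divisor of A 0 0, hence shorter. *)
apply: sym_diagonalizable_tr.
have [Q [sig [[LQ SQ CQ] [B01 dvd0 dvd1]]]] :=
  sym_col_reduce (laurent_tr LA) (compat_types_tr CA).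
rewrite ![A^T _ _]mxE in dvd0 dvd1.
apply: (sym_diagonalizable_mulr LQ SQ CQ); set B := mulmxL A^T Q.
have LB : laurent_mx B by apply: laurent_mulmxL; first exact: laurent_tr.
have B00 : ~ eq_punct (B 0 0) (fun _ => 0).
  by case: dvd0 => w _ Ew B00; apply: A00 => z z0; rewrite Ew // B00 // mul0r.
have nB : ~ dvdL (A 0 0) (B 0 0) by move=> dvdB; apply/ndvd/(dvdL_trans dvdB dvd1).
have ltB := llength_proper_dvd (LB 0 0) (LA 0 0) A00 dvd0 nB.
move: lt_n; rewrite ltnS => /(leq_trans ltB) lt_n.
apply: IH lt_n LB _ B01 B00.
exact: compat_types_mulmxL (compat_types_tr CA) CQ.
Qed.

Lemma sym_diagonalize (A : 'M[C -> C]_2) tau rho :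
  laurent_mx A -> compat_types A tau rho -> sym_diagonalizable A tau rho.
Proof.
move=> LA CA; have [Q [sig [[LQ SQ CQ] [B01 _ _]]]] := sym_col_reduce LA CA.
apply: (sym_diagonalizable_mulr LQ SQ CQ).
have LB := laurent_mulmxL LA LQ; have CB := compat_types_mulmxL CA CQ.
have [B00|B00] := classic (eq_punct (mulmxL A Q 0 0) (fun _ => 0)).
  exact: sym_diagonalizable_row0 LB CB B00 B01.
exact: sym_diagonalizable_descent LB CB B01 B00.
Qed.

End SymmetricDiagonalization.

(** * Multiplicities of zeros *)

(* [option nat] stands for nat extended by +oo = None, as in [Zmult]. *)
Definition le_mult (k : nat) (o : option nat) := if o is Some m then (k <= m)%N else true.

Definition add_mult (a b : option nat) :=
  if a is Some x then (if b is Some y then Some (x + y)%N else None) else None.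

Lemma le_mult_inj (o1 o2 : option nat) : (forall k, le_mult k o1 <-> le_mult k o2) -> o1 = o2.
Proof.
case: o1 => [x|]; case: o2 => [y|] //= E.
- by congr Some; apply/eqP; rewrite eqn_leq (E x).1 // (E y).2.
- by have := (E x.+1).2 isT; rewrite ltnn.
- by have := (E y.+1).1 isT; rewrite ltnn.
Qed.

Lemma mset2_eq_min_add (a b c d : option nat) :
  (forall k, le_mult k a /\ le_mult k b <-> le_mult k c) ->
  add_mult a b = add_mult c d -> (forall k, le_mult k c -> le_mult k d) ->
  mset2_eq a b c d.
Proof.
move=> Hmin Hadd Hcd.
have Hc : c = if a is Some x then (if b is Some y then Some (minn x y) else a) else b.
  apply: le_mult_inj => k; rewrite -Hmin.
  case: a b {Hmin Hadd} => [x|] [y|] /=; last by [].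
  - by rewrite leq_min; exact: (rwP andP).
  - by split=> [[]|].
  - by split=> [[]|].
rewrite /mset2_eq {}Hc in Hadd Hcd *; case: a b {Hmin} Hadd Hcd => [x|] [y|] /=.
- case: d => [e|] // [xy] _.
  by case: (leqP x y) => [le_xy|lt_yx]; [left | right]; split; congr Some; lia.
- by case: d => [e|] // _ _; left.
- by case: d => [e|] // _ _; right.
- case: d => [e|] _ Hd; last by left.
  by have := Hd e.+1 isT; rewrite /= ltnn.
Qed.

Section Multiplicities.
Variable C : numClosedFieldType.
Variable z0 : C.
Hypothesis z0_neq0 : z0 != 0.
Implicit Types (f u v w : C -> C) (p q : {poly C}).

Lemma mup_mulXn p m : p != 0 -> mup z0 (p * 'X^m) = mup z0 p.
Proof.
move=> p0; have Xm0 : ('X^m : {poly C}) != 0 by rewrite monic_neq0 ?monicXn.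
have XmE : 'X^m = ('X - 0%:P) ^+ m :> {poly C} by rewrite subr0.
rewrite mupM // XmE mup_XsubCX eq_sym.
by rewrite (negbTE z0_neq0) addn0.
Qed.

Lemma dvdL_XsubC_repr k u p n : laurent_repr u p n ->
  dvdL (fun z => (z - z0) ^+ k) u <-> ('X - z0%:P) ^+ k %| p.
Proof.
move=> Hu; have Xk : laurent_repr (fun z => (z - z0) ^+ k) (('X - z0%:P) ^+ k) 0.
  by move=> z _; rewrite horner_exp hornerXsubC expr0 divr1.
split=> [[w [q [m Hw]] Ew] | /dvdpP[r pr]].
  have coprime_Xm : coprimep (('X - z0%:P) ^+ k) 'X^m.
    apply/coprimep_expl/coprimep_expr; rewrite -[X in coprimep _ X]subr0 coprimep_XsubC.
    by rewrite root_XsubC eq_sym.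
  rewrite -(Gauss_dvdpl _ coprime_Xm).
  have Huw : laurent_repr u (('X - z0%:P) ^+ k * q) m.
    by move=> z z1; rewrite Ew // (laurent_repr_mul Xk Hw).
  by rewrite (laurent_repr_eq Hu Huw); apply/dvdp_mulr/dvdp_mulIl.
exists (fun z => r.[z] / z ^+ n); first by exists r, n.
by move=> z z1; rewrite Hu // pr hornerM horner_exp hornerXsubC mulrAC mulrC.
Qed.

Lemma Zmult_repr u p n : p != 0 -> laurent_repr u p n -> Zmult u z0 = Some (mup z0 p).
Proof.
move=> p0 Hu; have ex : exists p n, p != 0 /\ laurent_repr u p n by exists p, n.
rewrite /Zmult asboolT //; have [q0 [m Hq]] := lnum_spec ex.
by rewrite -(mup_mulXn m p0) (laurent_repr_eq Hu Hq) mup_mulXn.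
Qed.

Lemma Zmult_eq0 u : eq_punct u (fun _ => 0) -> Zmult u z0 = None.
Proof.
move=> u0; rewrite /Zmult asboolF // => -[p [n [p0 Hu]]].
by move: p0; rewrite ((laurent_repr_eq0 Hu).1 u0) eqxx.
Qed.

Lemma Zmult_ext u v : eq_punct u v -> Zmult u z0 = Zmult v z0.
Proof. by move=> E; rewrite /Zmult /lnum (laurent_repr_ext E). Qed.

Lemma Zmult_geP u k : is_laurent u ->
  dvdL (fun z => (z - z0) ^+ k) u <-> le_mult k (Zmult u z0).
Proof.
move=> Lu; have [u0|/(laurent_repr_neq0 Lu)[p [n [p0 Hu]]]] := classic (eq_punct u (fun _ => 0)).
  by rewrite Zmult_eq0 //; split=> // _; apply: dvdL_ext (dvdL0 _) u0.
by rewrite (Zmult_repr p0 Hu) /= mup_geq // (dvdL_XsubC_repr k Hu).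
Qed.

Lemma ZmultM u v : is_laurent u -> is_laurent v ->
  Zmult (fun z => u z * v z) z0 = add_mult (Zmult u z0) (Zmult v z0).
Proof.
move=> Lu Lv.
have [u0|/(laurent_repr_neq0 Lu)[p [n [p0 Hu]]]] := classic (eq_punct u (fun _ => 0)).
  by rewrite (Zmult_eq0 u0) Zmult_eq0 // => z z1; rewrite /= u0 // mul0r.
have [v0|/(laurent_repr_neq0 Lv)[q [m [q0 Hv]]]] := classic (eq_punct v (fun _ => 0)).
  by rewrite (Zmult_eq0 v0) Zmult_eq0 ?(Zmult_repr p0 Hu) // => z z1; rewrite /= v0 // mulr0.
rewrite (Zmult_repr p0 Hu) (Zmult_repr q0 Hv) /=.
by rewrite (Zmult_repr (mulf_neq0 p0 q0) (laurent_repr_mul Hu Hv)) mupM.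
Qed.

Lemma Zmult_unit u : is_laurent u -> dvdL u (fun _ => 1) -> Zmult u z0 = Some 0%N.
Proof.
move=> Lu [w Lw Euw].
have : add_mult (Zmult u z0) (Zmult w z0) = Some 0%N.
  rewrite -ZmultM // -(Zmult_ext Euw) (@Zmult_repr _ 1 0) ?oner_neq0 //.
    by rewrite mupNroot // rootC oner_neq0.
  by move=> z _; rewrite hornerC divr1.
by case: (Zmult u z0) => [[|x]|]; case: (Zmult w z0).
Qed.

Lemma Zmult_equiv_diag (X Y : 'M[C -> C]_2) (d1 d2 : {poly C}) e1 e2 :
  laurent_mx X -> laurent_mx Y -> strongly_inv X -> strongly_inv Y ->
  is_laurent e1 -> is_laurent e2 -> d1 %| d2 ->
  (forall z, z != 0 -> diag2 (e1 z) (e2 z) = mxev X z *m diag2 d1.[z] d2.[z] *m mxev Y z) ->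
  mset2_eq (Zmult e1 z0) (Zmult e2 z0) (Zmult (lpoly d1) z0) (Zmult (lpoly d2) z0).
Proof.
move=> LX LY SX SY L1 L2 d12 EXY.
have [Ld1 Ld2] := (laurent_poly d1, laurent_poly d2).
pose D := mx22 (lpoly d1) (fun _ => 0) (fun _ => 0) (lpoly d2).
pose De := mx22 e1 (fun _ => 0) (fun _ => 0) e2.
have ED z : z != 0 -> mxev De z = mxev X z *m mxev D z *m mxev Y z.
  by move=> z1; rewrite !mxev_mx22 -!diag2E EXY.
have [X' LX' EX'] := laurent_invmx LX SX; have [Y' LY' EY'] := laurent_invmx LY SY.
have EDe z : z != 0 -> mxev D z = mxev X' z *m mxev De z *m mxev Y' z.
  move=> z1; rewrite ED // EX' // EY' // mulmxA mulmxK ?strongly_inv_unitmx //.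
  by rewrite mulKmx ?strongly_inv_unitmx.
have d1d2 f : dvdL f (lpoly d1) -> dvdL f (lpoly d2).
  case/dvdpP: d12 => r -> fd1; apply: dvdL_ext (dvdL_mull (laurent_poly r) fd1) _.
  by move=> z _; rewrite /lpoly hornerM.
have dvd_min f : dvdL f e1 /\ dvdL f e2 <-> dvdL f (lpoly d1).
  split=> [[f1 f2]|f1].
    have dDe : forall i j, dvdL f (De i j) by apply: (@mx22P _ (dvdL f)) => //; exact: dvdL0.
    by have := dvdL_mx_mul LX' LY' dDe EDe 0 0; rewrite mxE.
  have dD : forall i j, dvdL f (D i j).
    by apply: (@mx22P _ (dvdL f)) => //; [exact: dvdL0 | exact: dvdL0 | exact: d1d2].
  have dDe := dvdL_mx_mul LX LY dD ED.
  by split; [have := dDe 0 0 | have := dDe 1 1]; rewrite mxE.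
have LXY := laurent_mulmxL LX LY.
have Eprod : eq_punct (fun z => e1 z * e2 z)
    (fun z => \det (mxev (mulmxL X Y) z) * (lpoly d1 z * lpoly d2 z)).
  move=> z z1; have := congr1 determinant (EXY z z1).
  rewrite mxev_mulmxL !det_mulmx !diag2E !det_mx22 !mxE /= !mulr0 !subr0 /lpoly => ->.
  by ring.
apply: mset2_eq_min_add => [k||k].
- by rewrite -!Zmult_geP.
- have Ldet := laurent_det LXY.
  rewrite -ZmultM // (Zmult_ext Eprod) ZmultM //; last exact: laurent_mul.
  rewrite (Zmult_unit Ldet (strongly_inv_det_unit (strongly_inv_mulmxL SX SY))) ZmultM //.
  by case: (Zmult (lpoly d1) z0) => [?|]; case: (Zmult (lpoly d2) z0).
- by move=> /(Zmult_geP k Ld1) /d1d2 /(Zmult_geP k Ld2).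
Qed.

End Multiplicities.

Theorem theorem3p13 (R : realType) (A : 'M[R[i] -> R[i]]_2) :
  laurent_mx A -> compat_sym A ->
  exists (P Q : 'M[R[i] -> R[i]]_2) (e1 e2 : R[i] -> R[i]),
    [/\ laurent_mx P, laurent_mx Q, strongly_inv P & strongly_inv Q] /\
    [/\ compat_sym P, compat_sym Q & compat_prod3 P A Q] /\
    [/\ is_laurent e1, is_laurent e2, has_symmetry e1 & has_symmetry e2] /\
    (forall z : R[i], z != 0 ->
          mxev P z *m mxev A z *m mxev Q z = diag2 (e1 z) (e2 z)) /\
    (forall (E F : 'M[R[i] -> R[i]]_2) (d1 d2 : {poly R[i]}),
          smith_form A E F d1 d2 ->
          forall z0 : R[i], z0 != 0 ->
            mset2_eq (Zmult e1 z0) (Zmult e2 z0)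
                     (Zmult (lpoly d1) z0) (Zmult (lpoly d2) z0)).
Proof.
move=> LA [tau [rho /(_ _ _)/has_type_divP CA]].
have [P [Q [tau' [rho' [[LP LQ SP SQ] [CP CQ D]]]]]] := sym_diagonalize LA CA.
pose M := mulmxL (mulmxL P A) Q.
have LM : laurent_mx M := laurent_mulmxL (laurent_mulmxL LP LA) LQ.
have CM : compat_types M tau' rho' := compat_types_mulmxL (compat_types_mulmxL CP CA) CQ.
have EM z : z != 0 -> mxev P z *m mxev A z *m mxev Q z = diag2 (M 0 0 z) (M 1 1 z).
  by move=> z0; have := D z z0; rewrite -!mxev_mulmxL => /is_diag_mx22_diag2 ->; rewrite !mxE.
exists P, Q, (M 0 0), (M 1 1); split; first by split.
split.
  split; [exact: compat_types_sym CP | exact: compat_types_sym CQ |].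
  by exists tau', tau, rho, rho'; split=> i j; apply/has_type_divP.
split.
  split=> //.
  - by exists (type_div (tau' 0) (rho' 0)); apply/has_type_divP; exact: CM.
  - by exists (type_div (tau' 1) (rho' 1)); apply/has_type_divP; exact: CM.
split=> // E F d1 d2 [[LE LF SE SF] [_ _ d12 ES]] z0 z0_neq0.
apply: (Zmult_equiv_diag z0_neq0 (laurent_mulmxL LP LE) (laurent_mulmxL LF LQ)
  (strongly_inv_mulmxL SP SE) (strongly_inv_mulmxL SF SQ) (LM 0 0) (LM 1 1) d12).
by move=> z z1; rewrite -EM // ES // !mxev_mulmxL !mulmxA.
Qed.
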